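(* Consider the parametric multistage stochastic optimization problem described in the context, and assume: (A1) the noises $\mathbf{W}_1,\dots,\mathbf{W}_T$ are independent and each has finite support; (A2) (i) the problem is feasible, i.e. $\Phi(p)<+\infty$ for some $p\in\mathcal{P}_{\mathrm{ad}}$; (ii) each dynamics $f_t$ is affine in $(x,u)$; (iii) for all $t\in\{0,\dots,T-1\}$ and all $w\in\mathrm{Supp}(\mathbf{W}_{t+1})$, the function $L_t(\cdot,\cdot,w,\cdot)$ belongs to $\Gamma_{\mathcal{K}}[\mathbb{X}\times\mathbb{U},\mathbb{P}]$; (iv) $K\in\Gamma[\mathbb{X},\mathbb{P}]$. Then the parametric value functions $V_0,\dots,V_T$ are proper and belong to $\Gamma[\mathbb{X},\mathbb{P}]$. Moreover, suppose in addition that, for a given set $\mathcal{P}\subset\mathbb{P}$: (A3) for all $t\in\{0,\dots,T-1\}$ and all $w\in\mathrm{Supp}(\mathbf{W}_{t+1})$, $L_t(\cdot,\cdot,w,\cdot)\in\Theta_{\mathcal{K}}[\mathbb{X}\times\mathbb{U},\mathcal{P}]$, and $K\in\Theta[\mathbb{X},\mathcal{P}]$. Then: (a) the functions $V_0,\dots,V_T$ belong to $\Theta[\mathbb{X},\mathcal{P}]$ and, for all $p\in\mathrm{int}\,\mathcal{P}$, their gradients with respect to $p$ are given by the backward induction $$\nabla_pV_T(x,p)=\nabla_pK(x,p)\quad\forall x\in\mathrm{dom}\,V_T(\cdot,p),$$ and, for every $t\in\{0,\dots,T-1\}$ and all $x\in\mathrm{dom}\,V_t(\cdot,p)$, $$\nabla_pV_t(x,p)=\mathbb{E}\big[\nabla_pL_t(x,u^\star,\mathbf{W}_{t+1},p)+\nabla_pV_{t+1}\big(f_t(x,u^\star,\mathbf{W}_{t+1}),p\big)\big],$$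 where $u^\star$ is any control in the solution set $\mathcal{U}^\star_t(x,p)$; (b) for any closed convex subset $\mathcal{P}_{\mathrm{ad}}\subset\mathcal{P}$, the upstream problem $\min_{p\in\mathcal{P}_{\mathrm{ad}}}\Phi(p)$ is a convex differentiable optimization problem.
   Context: Setting: $T\ge1$ is an integer; $\mathbb{X}=\mathbb{R}^{n_x}$, $\mathbb{U}=\mathbb{R}^{n_u}$, $\mathbb{W}=\mathbb{R}^{n_w}$, $\mathbb{P}=\mathbb{R}^{n_p}$. On a probability space, $\mathbf{W}_1,\dots,\mathbf{W}_T$ are random variables with values in $\mathbb{W}$; $\mathrm{Supp}(\mathbf{W}_t)$ is the set of values taken with positive probability. Given are dynamics $f_t:\mathbb{X}\times\mathbb{U}\times\mathbb{W}\to\mathbb{X}$, stage costs $L_t:\mathbb{X}\times\mathbb{U}\times\mathbb{W}\times\mathbb{P}\to\,]-\infty,+\infty]$ ($t=0,\dots,T-1$), a final cost $K:\mathbb{X}\times\mathbb{P}\to\,]-\infty,+\infty]$, an initial state $x_0\in\mathbb{X}$ and an admissible parameter set $\mathcal{P}_{\mathrm{ad}}\subseteq\mathbb{P}$. For $p\in\mathbb{P}$, $\Phi(p)=\inf\mathbb{E}\big[\sum_{t=0}^{T-1}L_t(\mathbf{X}_t,\mathbf{U}_t,\mathbf{W}_{t+1},p)+K(\mathbf{X}_T,p)\big]$, the infimum being over random controls $\mathbf{U}_t$ measurable with respect to $\sigma(\mathbf{W}_1,\dots,\mathbf{W}_t)$ ($\mathbf{U}_0$ deterministic), with $\mathbf{X}_0=x_0$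 and $\mathbf{X}_{t+1}=f_t(\mathbf{X}_t,\mathbf{U}_t,\mathbf{W}_{t+1})$. The upstream problem is $\min_{p\in\mathcal{P}_{\mathrm{ad}}}\Phi(p)$. The parametric value functions are defined by $V_T(x,p)=K(x,p)$ and $V_t(x,p)=\inf_{u\in\mathbb{U}}Q_t(x,u,p)$, where $Q_t(x,u,p)=\mathbb{E}\big[L_t(x,u,\mathbf{W}_{t+1},p)+V_{t+1}(f_t(x,u,\mathbf{W}_{t+1}),p)\big]$; the solution set is $\mathcal{U}^\star_t(x,p)=\arg\min_{u\in\mathbb{U}}Q_t(x,u,p)$. Under (A1), $\Phi(p)=V_0(x_0,p)$. A function is proper if it never takes the value $-\infty$ and its effective domain $\mathrm{dom}\,g=\{g<+\infty\}$ is nonempty. Function classes: for a Euclidean space $\mathbb{Y}$, $\Gamma[\mathbb{Y},\mathbb{P}]$ is the set of lower semicontinuous convex functions $\mathbb{Y}\times\mathbb{P}\to\,]-\infty,+\infty]$. For $\mathcal{P}\subset\mathbb{P}$, $\Theta[\mathbb{Y},\mathcal{P}]$ is the set of $\theta\in\Gamma[\mathbb{Y},\mathbb{P}]$ with $\mathrm{dom}\,\theta=Y_\theta\times\mathcal{P}$ for some (possibly empty) $Y_\theta\subset\mathbb{Y}$ and such that $\theta(y,\cdot)$ is differentiable on $\mathrm{int}\,\mathcal{P}$ for each $y\in Y_\theta$. $\Gamma_{\mathcal{K}}[\mathbb{X}\times\mathbb{U},\mathbb{P}]$ is the set of $\gamma\in\Gamma[\mathbb{X}\times\mathbb{U},\mathbb{P}]$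 for which some compact $\mathcal{K}_\gamma\subset\mathbb{U}$ satisfies $\mathrm{dom}\,\gamma(x,\cdot,p)\subset\mathcal{K}_\gamma$ for all $(x,p)$; $\Theta_{\mathcal{K}}[\mathbb{X}\times\mathbb{U},\mathcal{P}]=\Theta[\mathbb{X}\times\mathbb{U},\mathcal{P}]\cap\Gamma_{\mathcal{K}}[\mathbb{X}\times\mathbb{U},\mathbb{P}]$. *)

From HB Require Import structures.
From mathcomp Require Import all_boot all_order all_algebra.
From mathcomp Require Import all_classical all_reals all_analysis.
Set Implicit Arguments. Unset Strict Implicit. Unset Printing Implicit Defensive.
Import Order.TTheory GRing.Theory Num.Theory.
Import numFieldNormedType.Exports.
Local Open Scope classical_set_scope.
Local Open Scope ring_scope.

Section Defs.
Variable R : realType.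

Definition convex_subset (V : lmodType R) (A : set V) : Prop :=
  forall a b (l : R), A a -> A b -> 0 <= l -> l <= 1 ->
    A (l *: a + (1 - l) *: b).

Definition convex_ext (Y P : lmodType R) (theta : Y -> P -> \bar R) : Prop :=
  forall y1 y2 p1 p2 (l : R), 0 < l -> l < 1 ->
    (theta (l *: y1 + (1 - l) *: y2)%R (l *: p1 + (1 - l) *: p2)%R
      <= l%:E * theta y1 p1 + (1 - l)%:E * theta y2 p2)%E.

Definition Gamma_class (Y P : normedModType R) (theta : Y -> P -> \bar R)
  : Prop :=
  (forall y p, theta y p != -oo%E) /\
  lower_semicontinuous (fun z : Y * P => theta z.1 z.2) /\
  convex_ext theta.

Definition Theta_class (Y P : normedModType R) (Pset : set P)
  (theta : Y -> P -> \bar R) : Prop :=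
  Gamma_class theta /\
  exists Ytheta : set Y,
    (forall y p, (theta y p < +oo)%E <-> (Ytheta y /\ Pset p)) /\
    (forall y, Ytheta y -> forall p, interior Pset p ->
        differentiable (fun q => fine (theta y q)) p).

Definition GammaK_class (X U P : normedModType R)
  (gamma : X * U -> P -> \bar R) : Prop :=
  Gamma_class gamma /\
  exists KK : set U, compact KK /\
    (forall x u p, (gamma (x, u) p < +oo)%E -> KK u).

Definition ThetaK_class (X U P : normedModType R) (Pset : set P)
  (gamma : X * U -> P -> \bar R) : Prop :=
  Theta_class Pset gamma /\ GammaK_class gamma.

Definition proper_fun (Y P : Type) (g : Y -> P -> \bar R) : Prop :=
  (forall y p, g y p != -oo%E) /\ exists y p, (g y p < +oo)%E.

Variables (nx nu nw np : nat).
Local Notation X := 'rV[R]_nx.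
Local Notation U := 'rV[R]_nu.
Local Notation W := 'rV[R]_nw.
Local Notation P := 'rV[R]_np.

(* The noise W_t (t = 1..T) has finite support S t (a duplicate-free list of
   the values it takes with positive probability) and law pi t :
   P(W_t = w) = pi t w.  Independence of W_1..W_T means that the joint law is
   the product of these marginals (used in [Phi] below). *)
Definition finite_support_law (S : nat -> seq W) (pi : nat -> W -> R)
  (t : nat) : Prop :=
  uniq (S t) /\ (forall w, w \in S t -> 0 < pi t w) /\
  \sum_(w <- S t) pi t w = 1.

Definition Ew (S : nat -> seq W) (pi : nat -> W -> R) (t : nat)
  (g : W -> \bar R) : \bar R :=
  (\sum_(w <- S t) (pi t w)%:E * g w)%E.

Definition Ew_real (S : nat -> seq W) (pi : nat -> W -> R) (t : nat)
  (g : W -> R) : R :=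
  \sum_(w <- S t) pi t w * g w.

Variables (T : nat) (f : nat -> X -> U -> W -> X)
  (L : nat -> X -> U -> W -> P -> \bar R) (K : X -> P -> \bar R)
  (S : nat -> seq W) (pi : nat -> W -> R).

(* Vaux k = V_(T-k) *)
Fixpoint Vaux (k : nat) : X -> P -> \bar R :=
  match k with
  | 0 => K
  | k'.+1 => fun x p =>
      let t := (T - k'.+1)%N in
      ereal_inf (range (fun u : U =>
        Ew S pi t.+1 (fun w => (L t x u w p + Vaux k' (f t x u w) p)%E)))
  end.

Definition V (t : nat) : X -> P -> \bar R := Vaux (T - t).

Definition Q (t : nat) (x : X) (u : U) (p : P) : \bar R :=
  Ew S pi t.+1 (fun w => (L t x u w p + V t.+1 (f t x u w) p)%E).

Definition Ustar (t : nat) (x : X) (p : P) : set U :=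
  [set u | forall v, (Q t x u p <= Q t x v p)%E].

Fixpoint hists (n : nat) : seq (seq W) :=
  match n with
  | 0 => [:: [::]]
  | n'.+1 => [seq rcons h w | h <- hists n', w <- S n'.+1]
  end.

Definition hprob (h : seq W) : R :=
  \prod_(i < size h) pi i.+1 (nth 0 h i).

(* A non-anticipative policy: U_t = phi t (W_1,...,W_t)
   (a sigma(W_1..W_t)-measurable control, U_0 deterministic). *)
Definition policy := nat -> seq W -> U.

Fixpoint traj (x0 : X) (phi : policy) (h : seq W) (t : nat) : X :=
  match t with
  | 0 => x0
  | t'.+1 => f t' (traj x0 phi h t') (phi t' (take t' h)) (nth 0 h t')
  end.

Definition total_cost (x0 : X) (phi : policy) (p : P) (h : seq W) : \bar R :=
  (\sum_(t < T) L t (traj x0 phi h t) (phi t (take t h)) (nth 0%R h t) p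
    + K (traj x0 phi h T) p)%E.

Definition Jcost (x0 : X) (phi : policy) (p : P) : \bar R :=
  (\sum_(h <- hists T) (hprob h)%:E * total_cost x0 phi p h)%E.

Definition Phi (x0 : X) (p : P) : \bar R :=
  ereal_inf (range (fun phi : policy => Jcost x0 phi p)).

End Defs.

Definition affine_dyn (R : realType) (nx nu nw : nat)
  (ft : 'rV[R]_nx -> 'rV[R]_nu -> 'rV[R]_nw -> 'rV[R]_nx) : Prop :=
  forall w, exists (A : 'M[R]_(nx, nx)) (B : 'M[R]_(nu, nx)) (c : 'rV[R]_nx),
    forall x u, ft x u w = x *m A + u *m B + c.

From HB Require Import structures.
From mathcomp Require Import all_boot all_order all_algebra.
From mathcomp Require Import all_classical all_reals all_analysis.
From mathcomp Require Import ring lra.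
Import Order.TTheory GRing.Theory Num.Theory.
Import numFieldNormedType.Exports.
Set Implicit Arguments. Unset Strict Implicit. Unset Printing Implicit Defensive.
Local Open Scope classical_set_scope.
Local Open Scope ring_scope.

(* If V_{t+1} is proper, lsc and jointly convex,
   then Q_t is lsc and jointly convex in (x, u, p), because the noise has
   finite support and the dynamics are affine.  The u-domain of Q_t lies in
   a fixed compact set, so the infimum over u is attained, which makes V_t
   convex; V_t is lsc as an infimum over a compact set of an lsc function.
   For the gradient, fix a minimiser u at (x, p): near p the convex function
   V_t(x, .) lies below the differentiable function Q_t(x, u, .) and touches
   it at p, which forces V_t(x, .) to be differentiable at p with the same
   differential.  Dynamic programming over the finite tree of noise
   histories identifies Phi with V_0(x_0, .). *)

Lemma down_ind (n : nat) (P : nat -> Prop) :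
  P n -> (forall t, (t < n)%N -> P t.+1 -> P t) -> forall t, (t <= n)%N -> P t.
Proof.
move=> Pn step t tn; rewrite -(subKn tn).
elim: (n - t)%N (leq_subr t n) => [|k IHk] kn; first by rewrite subn0.
apply: step; first by rewrite ltn_subrL (leq_trans _ kn).
by rewrite subnSK //; apply: IHk; apply: ltnW.
Qed.

Section extended_sums.
Context {R : realType}.
Local Open Scope ereal_scope.

Lemma adde_neq_ninfty (x y : \bar R) : x != -oo -> y != -oo -> x + y != -oo.
Proof. by move=> xN yN; rewrite adde_eq_ninfty; apply/norP. Qed.

Lemma mule_neq_ninfty (a : R) (x : \bar R) : (0 < a)%R -> x != -oo -> a%:E * x != -oo.
Proof. by move=> a0; case: x => [r| |] // _; rewrite gt0_muley // lte_fin. Qed.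

Lemma adde_lt_pinfty (x y : \bar R) : x != -oo -> y != -oo ->
  (x + y < +oo) <-> (x < +oo /\ y < +oo).
Proof. by case: x => [r| |] //; case: y => [q| |] //= _ _; rewrite ?ltry; split => // -[]. Qed.

Lemma adde_def_neq_ninfty (x y : \bar R) : x != -oo -> y != -oo -> x +? y.
Proof. by case: x => [r| |] //; case: y. Qed.

Lemma fin_numP_neq_lt (x : \bar R) : x != -oo -> x < +oo -> x \is a fin_num.
Proof. by rewrite fin_numE -ltey => -> ->. Qed.

Lemma sume_distrr_neq_ninfty (I : eqType) (s : seq I) (x : R) (F : I -> \bar R) :
  (forall i, i \in s -> F i != -oo) ->
  x%:E * \sum_(i <- s) F i = \sum_(i <- s) x%:E * F i.
Proof.
move=> FN; rewrite big_seq [RHS]big_seq fin_num_sume_distrr // => i j si sj.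
exact: adde_def_neq_ninfty (FN _ si) (FN _ sj).
Qed.

Lemma sume_neq_ninfty (I : eqType) (s : seq I) (F : I -> \bar R) :
  (forall i, i \in s -> F i != -oo) -> \sum_(i <- s) F i != -oo.
Proof.
move=> FN; rewrite big_seq; apply: (big_ind (fun x : \bar R => x != -oo)) => //.
exact: adde_neq_ninfty.
Qed.

Section weighted_sum.
Variables (I : eqType) (s : seq I) (c : I -> R).
Hypothesis c_gt0 : forall i, i \in s -> (0 < c i)%R.

Lemma wsum_neq_ninfty (g : I -> \bar R) :
  (forall i, i \in s -> g i != -oo) -> \sum_(i <- s) (c i)%:E * g i != -oo.
Proof.
move=> gN; apply: sume_neq_ninfty => i si.
by apply: mule_neq_ninfty; [exact: c_gt0 | exact: gN].
Qed.

Lemma wsum_lt_pinfty (g : I -> \bar R) : (forall i, i \in s -> g i != -oo) ->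
  (\sum_(i <- s) (c i)%:E * g i < +oo) <-> (forall i, i \in s -> g i < +oo).
Proof.
move=> gN; split => [slt i si|glt]; last first.
  rewrite big_seq; apply: lte_sum_pinfty => i si.
  by apply: lte_mul_pinfty => //; [rewrite lee_fin ltW ?c_gt0 | exact: glt].
move: slt; rewrite (perm_big _ (perm_to_rem si)) big_cons.
have ciN := mule_neq_ninfty (c_gt0 si) (gN _ si).
have remN : \sum_(j <- rem i s) (c j)%:E * g j != -oo.
  apply: sume_neq_ninfty => j /mem_rem sj.
  exact: mule_neq_ninfty (c_gt0 sj) (gN _ sj).
move=> /(adde_lt_pinfty ciN remN) [+ _].
by case: (g i) => [r| |] //; rewrite ?ltry // gt0_muley // lte_fin c_gt0.
Qed.

Lemma wsum_le (g1 g2 : I -> \bar R) : (forall i, i \in s -> g1 i <= g2 i) ->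
  \sum_(i <- s) (c i)%:E * g1 i <= \sum_(i <- s) (c i)%:E * g2 i.
Proof.
move=> g12; rewrite big_seq [leRHS]big_seq; apply: lee_sum => i si.
by rewrite lee_pmul2l ?lte_fin ?c_gt0 ?g12.
Qed.

Lemma wsum_convex (g a b : I -> \bar R) (l : R) : (0 < l)%R -> (l < 1)%R ->
  (forall i, i \in s -> a i != -oo) -> (forall i, i \in s -> b i != -oo) ->
  (forall i, i \in s -> g i <= l%:E * a i + (1 - l)%:E * b i) ->
  \sum_(i <- s) (c i)%:E * g i <=
    l%:E * \sum_(i <- s) (c i)%:E * a i + (1 - l)%:E * \sum_(i <- s) (c i)%:E * b i.
Proof.
move=> l0 l1 aN bN gab; apply: (le_trans (wsum_le gab)).
have caN i : i \in s -> (c i)%:E * a i != -oo.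
  by move=> si; exact: mule_neq_ninfty (c_gt0 si) (aN _ si).
have cbN i : i \in s -> (c i)%:E * b i != -oo.
  by move=> si; exact: mule_neq_ninfty (c_gt0 si) (bN _ si).
rewrite !sume_distrr_neq_ninfty // -big_split /= big_seq [leRHS]big_seq.
apply: lee_sum => i si; rewrite muleDr //; last first.
  by apply: adde_def_neq_ninfty; apply: mule_neq_ninfty; rewrite ?subr_gt0 ?aN ?bN.
by rewrite !muleA -!EFinM (mulrC (c i)) (mulrC (c i)).
Qed.

Lemma wsum_fin (g : I -> \bar R) : (forall i, i \in s -> g i \is a fin_num) ->
  \sum_(i <- s) (c i)%:E * g i = (\sum_(i <- s) c i * fine (g i))%:E.
Proof.
move=> gf; rewrite -sumEFin big_seq [RHS]big_seq; apply: eq_bigr => i si.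
by rewrite EFinM fineK ?gf.
Qed.

Lemma mule_adde_wsum (x : R) (A : \bar R) (B C : I -> \bar R) :
  (\sum_(i <- s) c i = 1)%R ->
  A != -oo -> (forall i, B i != -oo) -> (forall i, C i != -oo) ->
  x%:E * (A + \sum_(i <- s) (c i)%:E * (B i + C i)) =
  \sum_(i <- s) (x * c i)%:E * (A + B i + C i).
Proof.
move=> c1 AN BN CN.
have Aeq : A = \sum_(i <- s) (c i)%:E * A.
  rewrite big_seq -ge0_sume_distrl; last by move=> i si; rewrite lee_fin ltW ?c_gt0.
  by rewrite -big_seq sumEFin c1 mul1e.
have cN i : i \in s -> (c i)%:E * A != -oo by move=> si; exact: mule_neq_ninfty (c_gt0 si) AN.
have cBCN i : i \in s -> (c i)%:E * (B i + C i) != -oo.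
  by move=> si; apply: mule_neq_ninfty (c_gt0 si) (adde_neq_ninfty (BN i) (CN i)).
rewrite {1}Aeq -big_split /= sume_distrr_neq_ninfty; last first.
  by move=> i si; exact: adde_neq_ninfty (cN _ si) (cBCN _ si).
apply: eq_big_seq => i si.
rewrite -muleDr ?adde_def_neq_ninfty ?adde_neq_ninfty //.
by rewrite muleA -EFinM addeA.
Qed.

End weighted_sum.

End extended_sums.

Section lower_semicontinuity.
Context {R : realType}.
Local Open Scope ereal_scope.

Lemma lsc_cst (T : topologicalType) (c : \bar R) :
  lower_semicontinuous (fun _ : T => c).
Proof. by move=> x a ac; exists setT => //; exact: filterT. Qed.

Lemma lsc_comp (T T' : topologicalType) (k : T' -> T) (g : T -> \bar R) :
  continuous k -> lower_semicontinuous g -> lower_semicontinuous (g \o k).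
Proof.
move=> kc gl x a /= ag; have [N nN HN] := gl _ _ ag.
by exists (k @^-1` N); [exact: kc | move=> y; exact: HN].
Qed.

Lemma lte_adde_split (x y : \bar R) (a : R) : x != -oo -> y != -oo ->
  a%:E < x + y -> exists a1 a2, a = (a1 + a2)%R /\ a1%:E < x /\ a2%:E < y.
Proof.
case: x => [r1| |] //; case: y => [r2| |] // _ _.
- rewrite -EFinD lte_fin => ar.
  exists (r1 - (r1 + r2 - a) / 2)%R, (r2 - (r1 + r2 - a) / 2)%R.
  by rewrite !lte_fin; split; [|split]; lra.
- move=> _; exists (r1 - 1)%R, (a - (r1 - 1))%R.
  by rewrite ltry lte_fin; split; [|split] => //; lra.
- move=> _; exists (a - (r2 - 1))%R, (r2 - 1)%R.
  by rewrite ltry lte_fin; split; [|split] => //; lra.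
- by move=> _; exists a, 0%R; rewrite !ltry; split => //; lra.
Qed.

Lemma lscD (T : topologicalType) (g h : T -> \bar R) :
  (forall x, g x != -oo) -> (forall x, h x != -oo) ->
  lower_semicontinuous g -> lower_semicontinuous h ->
  lower_semicontinuous (fun x => g x + h x).
Proof.
move=> gN hN gl hl x a /= ax.
have [a1 [a2 [-> [a1g a2h]]]] := lte_adde_split (gN x) (hN x) ax.
have [N1 nN1 H1] := gl _ _ a1g; have [N2 nN2 H2] := hl _ _ a2h.
exists (N1 `&` N2); first exact: filterI.
by move=> y [/H1 ? /H2 ?]; rewrite EFinD lteD.
Qed.

Lemma lscZ (T : topologicalType) (c : R) (g : T -> \bar R) : (0 < c)%R ->
  lower_semicontinuous g -> lower_semicontinuous (fun x => c%:E * g x).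
Proof.
move=> c0 gl x a /= ax.
have ag : (a / c)%:E < g x.
  move: ax; case: (g x) => [r| |] //=.
  - by rewrite -EFinM !lte_fin ltr_pdivrMr // mulrC.
  - by rewrite ltry.
  - by rewrite gt0_muleNy // ?lte_fin.
have [N nN HN] := gl _ _ ag; exists N => // y /HN.
by rewrite -(@lte_pmul2l _ c%:E) ?lte_fin // -EFinM mulrC divfK // gt_eqF.
Qed.

Lemma lsc_sum (T : topologicalType) (I : eqType) (s : seq I) (G : I -> T -> \bar R) :
  (forall i, i \in s -> forall x, G i x != -oo) ->
  (forall i, i \in s -> lower_semicontinuous (G i)) ->
  lower_semicontinuous (fun x => \sum_(i <- s) G i x).
Proof.
elim: s => [|i s IH] GN Gl.
  by under eq_fun do rewrite big_nil; exact: lsc_cst.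
under eq_fun do rewrite big_cons.
have GN' j : j \in s -> forall x, G j x != -oo by move=> sj; apply: GN; rewrite inE sj orbT.
apply: lscD; first by apply: GN; rewrite mem_head.
- by move=> x; apply: sume_neq_ninfty => j sj; exact: GN'.
- by apply: Gl; rewrite mem_head.
- by apply: IH => // j sj; apply: Gl; rewrite inE sj orbT.
Qed.

Lemma wsum_lsc (T : topologicalType) (I : eqType) (s : seq I) (c : I -> R)
    (G : I -> T -> \bar R) :
  (forall i, i \in s -> (0 < c i)%R) ->
  (forall i, i \in s -> forall x, G i x != -oo) ->
  (forall i, i \in s -> lower_semicontinuous (G i)) ->
  lower_semicontinuous (fun x => \sum_(i <- s) (c i)%:E * G i x).
Proof.
move=> c_gt0 GN Gl; apply: lsc_sum => i si.
- by move=> x; exact: mule_neq_ninfty (c_gt0 _ si) (GN _ si x).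
- exact: lscZ (c_gt0 _ si) (Gl _ si).
Qed.

End lower_semicontinuity.

Section infimum_over_compact.
Context {R : realType}.
Local Open Scope ereal_scope.

Lemma lee_EFin_ub (x m : \bar R) :
  (forall a : R, m < a%:E -> x <= a%:E) -> x <= m.
Proof.
case: m => [r| |] xa; last 2 first.
- by rewrite leey.
- case: x xa => [s| |] xa //; last by have := xa 0%R (ltNyr _).
  by have := xa (s - 1)%R (ltNyr _); rewrite lee_fin => ss1; exfalso; lra.
apply/lee_addgt0Pr => e e0; rewrite -EFinD; apply: xa.
by rewrite lte_fin ltrDl.
Qed.

Lemma lsc_inf_attained (U : topologicalType) (g : U -> \bar R) (KK : set U) (u0 : U) :
  compact KK -> lower_semicontinuous g -> (forall u, ~ KK u -> g u = +oo) ->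
  exists u, g u = ereal_inf (range g).
Proof.
move=> cK gl gout; set m := ereal_inf (range g).
have [mpinf|mfin] := eqVneq m +oo.
  exists u0; apply/eqP; rewrite mpinf -leye_eq -mpinf.
  by apply: ereal_inf_lbound; exists u0.
pose D := [set a : R | m < a%:E].
pose B := fun a : R => KK `&` [set u | g u <= a%:E].
have [a0 Da0] : exists a, D a.
  move: mfin; rewrite /D; case: (m) => [r| |] // _.
  - by exists (r + 1)%R; rewrite /= lte_fin ltrDl.
  - by exists 0%R; rewrite /= ltNyr.
have BF : ProperFilter (filter_from D B).
  apply: filter_from_proper; last first.
    move=> a Da; have [_ [u _ <-] gua] := ereal_inf_lt Da.
    exists u; split; last exact: ltW.
    by apply: contrapT => /gout gu; move: gua; rewrite gu.
  apply: filter_from_filter; first by exists a0.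
  move=> i j Di Dj; exists (Order.min i j); first by rewrite /D; case: (leP i j).
  move=> u [Ku gu]; split; split => //; apply: (le_trans gu);
    by rewrite lee_fin ge_min lexx ?orbT.
have BK : filter_from D B KK by exists a0 => // u [].
have [u [_ clu]] := cK _ BF BK.
exists u; apply/eqP; rewrite eq_le; apply/andP; split; last first.
  by apply: ereal_inf_lbound; exists u.
apply: lee_EFin_ub => a Da; rewrite leNgt; apply/negP => agu.
have [N nN HN] := gl _ _ agu.
have [v [[_ gva] Nv]] := clu (B a) N (ex_intro2 _ _ a Da (fun x h => h)) nN.
by move: (HN _ Nv); rewrite ltNge gva.
Qed.

Lemma lsc_inf_compact (A U : topologicalType) (G : U -> A -> \bar R) (KK : set U) :
  compact KK -> lower_semicontinuous (fun q : U * A => G q.1 q.2) ->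
  (forall u a, ~ KK u -> G u a = +oo) ->
  lower_semicontinuous (fun a => ereal_inf (range (fun u => G u a))).
Proof.
move=> cK Gl Gout z a /= az; set M := ereal_inf _ in az.
have [a' [aa' a'M]] : exists a' : R, (a < a')%R /\ a'%:E < M.
  move: az; case: M => [r| |] //.
  - by rewrite lte_fin => ar; exists ((a + r) / 2)%R; rewrite lte_fin; split; lra.
  - by move=> _; exists (a + 1)%R; rewrite ltry; split => //; lra.
have cover : \forall i \near z, KK `<=` (fun u => a'%:E < G u i).
  apply: ((compact_near_coveringP KK).1 cK A (nbhs z) (fun i u => a'%:E < G u i)) => u _.
  have a'G : a'%:E < G u z.
    by apply: (lt_le_trans a'M); apply: ereal_inf_lbound; exists u.
  have [N nN HN] := Gl (u, z) _ a'G.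
  by apply: filterS nN => q /HN.
exists (fun i => KK `<=` (fun u => a'%:E < G u i)) => // i Ki.
apply: (lt_le_trans _ (_ : a'%:E <= _)); first by rewrite lte_fin.
apply: le_ereal_inf_tmp => _ [u _ <-].
have [Ku|nKu] := pselect (KK u); first exact: ltW (Ki u Ku).
by rewrite Gout // leey.
Qed.

End infimum_over_compact.

Section function_classes.
Context {R : realType} {Y P : normedModType R}.
Local Open Scope ereal_scope.

Definition rect_dom (Pset : set P) (theta : Y -> P -> \bar R) :=
  forall y p, theta y p < +oo -> Pset p /\ forall q, Pset q -> theta y q < +oo.

Definition interior_differentiable (Pset : set P) (theta : Y -> P -> \bar R) :=
  forall y p q, theta y p < +oo -> interior Pset q ->
    differentiable (fun r => fine (theta y r)) q.

Lemma Theta_classP (Pset : set P) (theta : Y -> P -> \bar R) :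
  Theta_class Pset theta <->
  [/\ Gamma_class theta, rect_dom Pset theta & interior_differentiable Pset theta].
Proof.
split=> [[G [Yt [dom dif]]]|[G dom dif]].
  split=> // [y p /dom [Yy Pp]|y p q /dom [Yy _] iq]; last exact: dif.
  by split=> // q Pq; apply/dom.
split=> //; exists (fun y => exists p, theta y p < +oo); split=> [y p|y [p' yp'] q iq].
  split=> [yp|[[p' yp'] Pp]]; last exact: (dom _ _ yp').2.
  by split; [exists p | exact: (dom _ _ yp).1].
exact: dif yp' iq.
Qed.

Lemma comb_self (V : lmodType R) (z : V) (l : R) : (l *: z + (1 - l) *: z = z)%R.
Proof. by rewrite -scalerDl addrC subrK scale1r. Qed.

Lemma convex_ext_midpoint (theta : Y -> P -> \bar R) y p v : convex_ext theta ->
  theta y p \is a fin_num -> theta y (p + v)%R \is a fin_num ->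
  theta y (p - v)%R \is a fin_num ->
  (2 * fine (theta y p) <= fine (theta y (p + v)%R) + fine (theta y (p - v)%R))%R.
Proof.
move=> conv fp fpv fmv.
have half_gt0 : (0 < 1 / 2 :> R)%R by [].
have half_lt1 : (1 / 2 < 1 :> R)%R by rewrite ltr_pdivrMr // mul1r ltr1n.
have := conv y y (p + v)%R (p - v)%R _ half_gt0 half_lt1.
rewrite comb_self; have -> : (1 - 1 / 2 = 1 / 2 :> R)%R by lra.
rewrite -scalerDr addrACA subrr addr0 scalerDr -scalerDl.
have -> : (1 / 2 + 1 / 2 = 1 :> R)%R by lra.
rewrite scale1r -(fineK fp) -(fineK fpv) -(fineK fmv) -!EFinM -EFinD lee_fin.
by lra.
Qed.

End function_classes.

Section differentials.
Context {R : realType} {E : normedModType R}.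

Lemma near0_opp (Q : E -> Prop) :
  (\forall v \near (0 : E), Q v) -> \forall v \near (0 : E), Q (- v).
Proof.
have opp0 : (fun v : E => - v) @ (0 : E) --> (0 : E).
  by have := @oppr_continuous R E 0; rewrite /continuous_at oppr0.
exact: opp0.
Qed.

(* g (p + v) is squeezed between H (p + v) and, by midpoint convexity,
   2 H p - H (p - v); both bounds are H p + 'd H p v + o(v). *)
Lemma midconvex_touched_differentiable (g H : E -> R) (p : E) (N : set E) :
  nbhs p N -> differentiable H p ->
  (forall q, N q -> g q <= H q) -> g p = H p ->
  (forall v, N (p + v) -> N (p - v) -> 2 * g p <= g (p + v) + g (p - v)) ->
  differentiable g p /\ 'd g p = 'd H p :> (E -> R).
Proof.
move=> Np Hd gH gpHp gconv.
have /eqaddoP oH := diff_locally Hd.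
have gexp : g \o shift p = cst (g p) + 'd H p +o_ (0 : E) id.
  apply/eqaddoP => e e0; have e2 : 0 < e / 2 by rewrite divr_gt0.
  have Hp := oH _ e2; have Hm := near0_opp Hp.
  have Np' := (nbhs0P N p).1 Np; have Nm := near0_opp Np'.
  apply: filterS (filterI (filterI Hp Hm) (filterI Np' Nm)) => v [[Hpv Hmv] [Npv Nmv]].
  have half : e / 2 * `|v| = e * `|v| / 2 by rewrite mulrAC.
  move: Hpv Hmv; rewrite !fctE /= linearN normrN !(addrC _ p) half !ler_norml.
  move=> /andP[? ?] /andP[? ?].
  have := gH _ Npv; have := gH _ Nmv; have := gconv _ Npv Nmv.
  by rewrite gpHp => *; apply/andP; split; lra.
have dg : 'd g p = 'd H p :> (E -> R) := diff_unique (diff_continuous Hd) gexp.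
by split=> //; apply/diff_locallyP; rewrite dg; split=> //; exact: diff_continuous.
Qed.

Lemma differentiable_wsum (I : eqType) (s : seq I) (c : I -> R) (F : I -> E -> R)
    (p : E) :
  (forall i, i \in s -> differentiable (F i) p) ->
  differentiable (fun q => \sum_(i <- s) c i * F i q) p /\
  forall h, 'd (fun q => \sum_(i <- s) c i * F i q) p h = \sum_(i <- s) c i * 'd (F i) p h.
Proof.
elim: s => [|j s IH] Fd.
  under eq_fun do rewrite big_nil.
  by split=> [|h]; [exact: differentiable_cst | rewrite diff_cst big_nil].
have [dr dre] : differentiable (fun q => \sum_(i <- s) c i * F i q) p /\
  forall h, 'd (fun q => \sum_(i <- s) c i * F i q) p h = \sum_(i <- s) c i * 'd (F i) p h.
  by apply: IH => i si; apply: Fd; rewrite inE si orbT.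
have dj : differentiable (F j) p by apply: Fd; rewrite mem_head.
have -> : (fun q => \sum_(i <- j :: s) c i * F i q) =
    (c j *: F j) + (fun q => \sum_(i <- s) c i * F i q).
  by apply: funext => q; rewrite big_cons.
split; first by apply: differentiableD => //; apply: differentiableZ.
move=> h; rewrite diffD; [|exact: differentiableZ|exact: dr].
by rewrite (diffZ (c j) dj) big_cons -dre.
Qed.

End differentials.

Lemma fst_continuous {A B : topologicalType} : continuous (@fst A B).
Proof. by move=> q; exact: cvg_fst. Qed.

Lemma snd_continuous {A B : topologicalType} : continuous (@snd A B).
Proof. by move=> q; exact: cvg_snd. Qed.

Lemma pair_continuous (Y A B : topologicalType) (g : Y -> A) (h : Y -> B) :
  continuous g -> continuous h -> continuous (fun y => (g y, h y)).
Proof. by move=> gc hc y; apply: cvg_pair; [exact: gc | exact: hc]. Qed.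

Lemma comp_continuous (A B C : topologicalType) (g : A -> B) (h : B -> C) :
  continuous g -> continuous h -> continuous (h \o g).
Proof. by move=> gc hc x; exact: continuous_comp (gc x) (hc (g x)). Qed.

Section matrix_continuity.
Context {R : realType}.

Lemma continuousD_fun (Y : topologicalType) (Z : normedModType R) (g h : Y -> Z) :
  continuous g -> continuous h -> continuous (fun y => g y + h y).
Proof. by move=> gc hc y; apply: continuousD; [exact: gc | exact: hc]. Qed.

Lemma mx_continuous (Y : topologicalType) m n (g : Y -> 'M[R]_(m, n)) :
  (forall i j, continuous (fun y => g y i j)) -> continuous g.
Proof.
move=> gc y A [Q QM QA].
have : \forall z \near y, forall i j, Q i j (g z i j).
  by apply: filter_forall => i; apply: filter_forall => j; exact: gc i j y _ (QM i j).
by apply: filterS => z Hz; apply: QA.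
Qed.

Lemma mulmx_continuous m n (A : 'M[R]_(m, n)) :
  continuous (fun x : 'rV[R]_m => x *m A).
Proof.
apply: mx_continuous => i j; under eq_fun do rewrite mxE.
apply: (@continuous_big _ _ +%R 0 _ add_continuous) => k _ x.
by apply: continuousM; [exact: coord_continuous | exact: cst_continuous].
Qed.

End matrix_continuity.

Section parametric_value_functions.
Variables (R : realType) (nx nu nw np T : nat)
  (f : nat -> 'rV[R]_nx -> 'rV[R]_nu -> 'rV[R]_nw -> 'rV[R]_nx)
  (L : nat -> 'rV[R]_nx -> 'rV[R]_nu -> 'rV[R]_nw -> 'rV[R]_np -> \bar R)
  (K : 'rV[R]_nx -> 'rV[R]_np -> \bar R)
  (S : nat -> seq 'rV[R]_nw) (pi : nat -> 'rV[R]_nw -> R).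

Local Notation X := 'rV[R]_nx.
Local Notation U := 'rV[R]_nu.
Local Notation W := 'rV[R]_nw.
Local Notation P := 'rV[R]_np.
Local Notation Vf := (V T f L K S pi).
Local Notation Qf := (Q T f L K S pi).

Hypothesis L_neq_ninfty : forall t x u w p, L t x u w p != -oo%E.
Hypothesis noise_law : forall t, (1 <= t <= T)%N -> finite_support_law S pi t.
Hypothesis f_affine : forall t, (t < T)%N -> affine_dyn (f t).
Hypothesis L_GammaK : forall t w, (t < T)%N -> w \in S t.+1 ->
  GammaK_class (fun z p => L t z.1 z.2 w p).
Hypothesis K_Gamma : Gamma_class K.

Local Open Scope ereal_scope.

Lemma V_T : Vf T = K.
Proof. by rewrite /V subnn. Qed.

Lemma V_inf t : (t < T)%N ->
  Vf t = fun x p => ereal_inf (range (fun u => Qf t x u p)).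
Proof.
move=> tT; rewrite /Q /V.
have -> : (T - t = (T - t.+1).+1)%N by rewrite subnSK.
have E : (T - (T - t.+1).+1 = t)%N by rewrite subnSK // subKn // ltnW.
by rewrite /= E.
Qed.

Lemma pi_gt0 t : (t < T)%N -> forall w, w \in S t.+1 -> (0 < pi t.+1 w)%R.
Proof. by move=> tT; have [_ []] := @noise_law t.+1 tT. Qed.

Lemma pi_sum1 t : (t < T)%N -> (\sum_(w <- S t.+1) pi t.+1 w = 1)%R.
Proof. by move=> tT; have [_ []] := @noise_law t.+1 tT. Qed.

Lemma support_nonempty t : (t < T)%N -> exists w, w \in S t.+1.
Proof.
move=> /pi_sum1; case: (S t.+1) => [|w s]; last by exists w; rewrite mem_head.
by rewrite big_nil => /eqP; rewrite eq_sym oner_eq0.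
Qed.

Lemma f_comb t w x1 x2 u1 u2 (l : R) : (t < T)%N ->
  f t (l *: x1 + (1 - l) *: x2)%R (l *: u1 + (1 - l) *: u2)%R w =
  (l *: f t x1 u1 w + (1 - l) *: f t x2 u2 w)%R.
Proof.
move=> tT; have [A [B [c fE]]] := f_affine tT w.
rewrite !fE !mulmxDl -!scalemxAl.
move: (x1 *m A) (x2 *m A) (u1 *m B) (u2 *m B) => a1 a2 b1 b2.
by apply/rowP => j; rewrite !mxE; ring.
Qed.

Lemma f_continuous t w : (t < T)%N -> continuous (fun z : X * U => f t z.1 z.2 w).
Proof.
move=> tT; have [A [B [c fE]]] := f_affine tT w; under eq_fun do rewrite fE.
apply: continuousD_fun; last exact: cst_continuous.
apply: continuousD_fun.
- exact: comp_continuous fst_continuous (mulmx_continuous (A := A)).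
- exact: comp_continuous snd_continuous (mulmx_continuous (A := B)).
Qed.

Section one_step.
Variable t : nat.
Hypothesis tT : (t < T)%N.

Lemma Q_neq_ninfty x u p : (forall y q, Vf t.+1 y q != -oo) -> Qf t x u p != -oo.
Proof.
move=> VN; apply: wsum_neq_ninfty; first exact: pi_gt0.
by move=> w _; apply: adde_neq_ninfty.
Qed.

Lemma Q_lt_pinfty x u p : (forall y q, Vf t.+1 y q != -oo) ->
  Qf t x u p < +oo <-> forall w, w \in S t.+1 ->
     L t x u w p < +oo /\ Vf t.+1 (f t x u w) p < +oo.
Proof.
move=> VN; rewrite /Q /Ew wsum_lt_pinfty; last 2 first.
- exact: pi_gt0.
- by move=> w _; apply: adde_neq_ninfty.
by split=> Qlt w /Qlt; rewrite adde_lt_pinfty.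
Qed.

Lemma Q_dom_compact : (forall y q, Vf t.+1 y q != -oo) ->
  exists KK : set U, compact KK /\ forall x u p, ~ KK u -> Qf t x u p = +oo.
Proof.
move=> VN; have [w0 w0S] := support_nonempty tT.
have [_ [KK [cK Ldom]]] := L_GammaK tT w0S.
exists KK; split=> // x u p nK; apply/eqP; rewrite eq_le leey /= leNgt.
by apply/negP => /(Q_lt_pinfty x u p VN) /(_ _ w0S) [/(Ldom x u p)].
Qed.

Lemma Q_lsc : Gamma_class (Vf t.+1) ->
  lower_semicontinuous (fun q : U * (X * P) => Qf t q.2.1 q.1 q.2.2).
Proof.
move=> [VN [Vlsc _]]; apply: wsum_lsc; first exact: pi_gt0.
  by move=> w _ q; apply: adde_neq_ninfty.
move=> w wS; have [[_ [Llsc _]] _] := L_GammaK tT wS.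
have x_u_cont : continuous (fun q : U * (X * P) => (q.2.1, q.1)) :=
  pair_continuous (comp_continuous snd_continuous fst_continuous) fst_continuous.
have p_cont : continuous (fun q : U * (X * P) => q.2.2) :=
  comp_continuous snd_continuous snd_continuous.
apply: (lscD (g := fun q : U * (X * P) => L t q.2.1 q.1 w q.2.2)
  (h := fun q => Vf t.+1 (f t q.2.1 q.1 w) q.2.2)) => //.
- exact: lsc_comp (pair_continuous x_u_cont p_cont) Llsc.
- have f_cont := comp_continuous x_u_cont (f_continuous (w := w) tT).
  exact: lsc_comp (pair_continuous f_cont p_cont) Vlsc.
Qed.

Lemma Q_convex : Gamma_class (Vf t.+1) ->
  forall x1 x2 u1 u2 p1 p2 (l : R), (0 < l)%R -> (l < 1)%R ->
  Qf t (l *: x1 + (1 - l) *: x2)%R (l *: u1 + (1 - l) *: u2)%R (l *: p1 + (1 - l) *: p2)%R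
    <= l%:E * Qf t x1 u1 p1 + (1 - l)%:E * Qf t x2 u2 p2.
Proof.
move=> [VN [_ Vconv]] x1 x2 u1 u2 p1 p2 l l0 l1.
apply: wsum_convex => //; first exact: pi_gt0.
- by move=> w _; apply: adde_neq_ninfty.
- by move=> w _; apply: adde_neq_ninfty.
move=> w wS; have l1' : (0 < 1 - l)%R by rewrite subr_gt0.
rewrite muleDr ?adde_def_neq_ninfty // muleDr ?adde_def_neq_ninfty //.
rewrite addeACA; apply: leeD.
- by have [[_ [_ Lconv]] _] := L_GammaK tT wS; exact: (Lconv (x1, u1) (x2, u2)).
- by rewrite f_comb //; exact: Vconv.
Qed.

Lemma V_attained : Gamma_class (Vf t.+1) -> forall x p, exists u, Vf t x p = Qf t x u p.
Proof.
move=> VG x p; have [KK [cK Qout]] := Q_dom_compact VG.1.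
have Qx_lsc : lower_semicontinuous (fun u => Qf t x u p).
  apply: (lsc_comp (k := fun u : U => (u, (x, p)))) (Q_lsc VG).
  apply: (pair_continuous (g := id) (h := cst (x, p))); first by move=> ?; exact: cvg_id.
  exact: cst_continuous.
have [u Qu] := lsc_inf_attained (0%R : U) cK Qx_lsc (fun u nK => Qout x u p nK).
by exists u; rewrite V_inf // Qu.
Qed.

Lemma V_Gamma_step : Gamma_class (Vf t.+1) -> Gamma_class (Vf t).
Proof.
move=> VG; have [KK [cK Qout]] := Q_dom_compact VG.1.
split; [|split].
- by move=> x p; have [u ->] := V_attained VG x p; exact: Q_neq_ninfty VG.1.
- rewrite V_inf //; apply: (lsc_inf_compact (G := fun u z => Qf t z.1 u z.2)) cK _ _.
    exact: Q_lsc VG.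
  by move=> u z nK; apply: Qout.
- move=> x1 x2 p1 p2 l l0 l1.
  have [u1 ->] := V_attained VG x1 p1; have [u2 ->] := V_attained VG x2 p2.
  rewrite V_inf //; apply: le_trans (Q_convex VG x1 x2 u1 u2 p1 p2 l0 l1).
  by apply: ereal_inf_lbound; exists (l *: u1 + (1 - l) *: u2)%R.
Qed.

End one_step.

Lemma V_Gamma t : (t <= T)%N -> Gamma_class (Vf t).
Proof. by move: t; apply: down_ind => [|t tT]; [rewrite V_T | exact: V_Gamma_step]. Qed.

Lemma V_argmin t : (t < T)%N -> forall x p, exists u, Vf t x p = Qf t x u p.
Proof. by move=> tT; apply: V_attained (V_Gamma tT). Qed.

Lemma V_neq_ninfty t : (t <= T)%N -> forall x p, Vf t x p != -oo.
Proof. by move=> tT; have [] := V_Gamma tT. Qed.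

Lemma Ustar_V t x p u : (t < T)%N -> Ustar T f L K S pi t x p u -> Vf t x p = Qf t x u p.
Proof.
move=> tT uopt; rewrite V_inf //; apply/eqP; rewrite eq_le; apply/andP; split.
  by apply: ereal_inf_lbound; exists u.
by apply: le_ereal_inf_tmp => _ [v _ <-]; exact: uopt.
Qed.

Lemma size_hists n h : h \in hists S n -> size h = n.
Proof.
elim: n h => [|n IH] h /=; first by rewrite inE => /eqP ->.
by case/allpairsP => -[g w] [/= /IH <- _ ->]; rewrite size_rcons.
Qed.

Lemma sum_hists_rcons (F : seq W -> \bar R) n :
  \sum_(g <- hists S n.+1) F g = \sum_(h <- hists S n) \sum_(w <- S n.+1) F (rcons h w).
Proof. by rewrite /= big_allpairs_dep. Qed.

Section policy_cost.
Variables (x0 : X) (phi : policy R nu nw) (p : P).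
Local Notation state := (traj f x0 phi).

Lemma state_take h n m : (m <= n)%N -> state (take n h) m = state h m.
Proof.
elim: m => [|m IH] mn //=.
by rewrite IH ?(ltnW mn) // take_takel ?(ltnW mn) // nth_take.
Qed.

Lemma state_rcons h w m : (m <= size h)%N -> state (rcons h w) m = state h m.
Proof. by move=> mh; rewrite -(state_take _ mh) -cats1 take_size_cat. Qed.

Lemma state_rcons_size h w :
  state (rcons h w) (size h).+1 = f (size h) (state h (size h)) (phi (size h) h) w.
Proof. by rewrite /= state_rcons // -cats1 take_size_cat // cats1 nth_rcons ltnn eqxx. Qed.

Lemma hprob_rcons h w : hprob pi (rcons h w) = (hprob pi h * pi (size h).+1 w)%R.
Proof.
rewrite /hprob size_rcons big_ord_recr /= nth_rcons ltnn eqxx; congr (_ * _)%R.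
by apply: eq_bigr => i _; rewrite nth_rcons ltn_ord.
Qed.

(* [cost_to_go k h]: expected cost of the last [k] stages under [phi], given
   the history [h] of the first [T - k] noises. *)
Fixpoint cost_to_go (k : nat) (h : seq W) {struct k} : \bar R :=
  match k with
  | 0 => K (state h T) p
  | k'.+1 => let t := (T - k'.+1)%N in
      Ew S pi t.+1 (fun w =>
        L t (state h t) (phi t (take t h)) w p + cost_to_go k' (rcons h w))
  end.

Lemma cost_to_go_neq_ninfty k h : (k <= T)%N -> cost_to_go k h != -oo.
Proof.
elim: k h => [|k IH] h kT /=; first exact: K_Gamma.1.
have tT : (T - k.+1 < T)%N by rewrite ltn_subrL (leq_trans _ kT).
apply: wsum_neq_ninfty; first exact: pi_gt0.
by move=> w _; apply: adde_neq_ninfty => //; apply: IH; apply: ltnW.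
Qed.

(* Stages before [n] are summed along each noise history, later ones through
   [cost_to_go]: [mixed_cost T] is [Jcost] and [mixed_cost 0] is [cost_to_go T [::]]. *)
Definition mixed_cost n := \sum_(h <- hists S n) (hprob pi h)%:E *
  (\sum_(t < n) L t (state h t) (phi t (take t h)) (nth 0%R h t) p + cost_to_go (T - n) h).

Lemma mixed_cost_succ n : (n < T)%N -> mixed_cost n.+1 = mixed_cost n.
Proof.
move=> nT; rewrite /mixed_cost sum_hists_rcons; apply: eq_big_seq => h /size_hists sh.
have -> : (T - n = (T - n.+1).+1)%N by rewrite subnSK.
rewrite /= (_ : (T - (T - n.+1).+1)%N = n); last by rewrite subnSK // subKn // ltnW.
rewrite take_oversize ?sh // /Ew mule_adde_wsum; first last.
- by move=> w; apply: cost_to_go_neq_ninfty; rewrite leq_subr.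
- by move=> w; apply: L_neq_ninfty.
- by apply: sume_neq_ninfty => i _; apply: L_neq_ninfty.
- exact: pi_sum1.
- exact: pi_gt0.
apply: eq_big_seq => w wS; rewrite hprob_rcons sh big_ord_recr /=; congr (_ * (_ + _ + _)).
- apply: eq_bigr => i _; have ih : (i <= size h)%N by rewrite sh ltnW.
  by rewrite state_rcons // -cats1 takel_cat // cats1 nth_rcons sh ltn_ord.
- by rewrite state_rcons ?sh // -cats1 take_size_cat // cats1 nth_rcons sh ltnn eqxx.
Qed.

Lemma Jcost_cost_to_go : Jcost T f L K S pi x0 phi p = cost_to_go T [::].
Proof.
have mixed_cost0 n : (n <= T)%N -> mixed_cost n = mixed_cost 0.
  by elim: n => [|n IH] nT //; rewrite mixed_cost_succ // IH // ltnW.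
have := mixed_cost0 T (leqnn T).
rewrite /mixed_cost subnn subn0 /= big_cons big_nil big_ord0 /hprob /= big_ord0.
by rewrite add0e mul1e adde0 => <-.
Qed.

Lemma V_le_cost_to_go k h : (k <= T)%N -> size h = (T - k)%N ->
  Vf (T - k) (state h (T - k)) p <= cost_to_go k h.
Proof.
elim: k h => [|k IH] h kT sh; first by rewrite subn0 V_T.
have tT : (T - k.+1 < T)%N by rewrite ltn_subrL (leq_trans _ kT).
have E : (T - k = (T - k.+1).+1)%N by rewrite subnSK.
move: tT E sh; set t := (T - k.+1)%N => tT E sh.
rewrite /= -/t take_oversize ?sh //; apply: (@le_trans _ _ (Qf t (state h t) (phi t h) p)).
  by rewrite V_inf //; apply: ereal_inf_lbound; exists (phi t h).
apply: wsum_le => [|w wS]; first exact: pi_gt0.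
apply: leeD => //; have := IH (rcons h w) (ltnW kT); rewrite size_rcons sh E => /(_ erefl).
by rewrite -sh state_rcons_size.
Qed.

End policy_cost.

Section optimal_policy.
Variables (x0 : X) (p : P).

Definition argmin_sel t x := xget 0%R [set u | Vf t x p = Qf t x u p].

Fixpoint opt_state t (h : seq W) : X :=
  match t with
  | 0 => x0
  | t'.+1 => f t' (opt_state t' h) (argmin_sel t' (opt_state t' h)) (nth 0%R h t')
  end.

Definition opt_policy : policy R nu nw := fun t h => argmin_sel t (opt_state t h).

Lemma argmin_selP t x : (t < T)%N -> Vf t x p = Qf t x (argmin_sel t x) p.
Proof.
move=> tT; rewrite /argmin_sel; case: xgetP => // none.
by have [u Vu] := V_argmin tT x p; have := none u.
Qed.

Lemma opt_state_take t n h : (t <= n)%N -> opt_state t (take n h) = opt_state t h.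
Proof. by elim: t => [|t IH] tn //=; rewrite IH ?(ltnW tn) // nth_take. Qed.

Lemma traj_opt_policy h t : traj f x0 opt_policy h t = opt_state t h.
Proof. by elim: t => [|t IH] //=; rewrite IH /opt_policy opt_state_take. Qed.

Lemma cost_to_go_opt k h : (k <= T)%N -> size h = (T - k)%N ->
  cost_to_go x0 opt_policy p k h = Vf (T - k) (opt_state (T - k) h) p.
Proof.
elim: k h => [|k IH] h kT sh; first by rewrite subn0 V_T /= traj_opt_policy.
have tT : (T - k.+1 < T)%N by rewrite ltn_subrL (leq_trans _ kT).
have E : (T - k = (T - k.+1).+1)%N by rewrite subnSK.
move: tT E sh; set t := (T - k.+1)%N => tT E sh.
rewrite /= -/t traj_opt_policy /opt_policy opt_state_take // (argmin_selP _ tT).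
apply: eq_bigr => w _; rewrite IH ?(ltnW kT) ?size_rcons ?sh ?E //=.
rewrite -(opt_state_take (rcons h w) (leqnn t)) -cats1 take_size_cat //.
by rewrite cats1 nth_rcons sh ltnn eqxx.
Qed.

End optimal_policy.

Lemma Phi_V0 x0 p : Phi T f L K S pi x0 p = Vf 0 x0 p.
Proof.
apply/eqP; rewrite eq_le; apply/andP; split.
  apply: (@le_trans _ _ (Jcost T f L K S pi x0 (opt_policy x0 p) p)).
    by apply: ereal_inf_lbound; exists (opt_policy x0 p).
  by rewrite Jcost_cost_to_go cost_to_go_opt // subnn.
apply: le_ereal_inf_tmp => _ [phi _ <-]; rewrite Jcost_cost_to_go.
by have := V_le_cost_to_go x0 phi p (leqnn T); rewrite subnn => /(_ [::] erefl).
Qed.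

Lemma V_dom_nonempty x0 p : Vf 0 x0 p < +oo ->
  forall t, (t <= T)%N -> exists y, Vf t y p < +oo.
Proof.
move=> V0 t; elim: t => [|t IH] tT; first by exists x0.
have [y Vy] := IH (ltnW tT); have [u Vu] := V_argmin tT y p.
have [w0 w0S] := support_nonempty tT.
move: Vy; rewrite Vu => /(Q_lt_pinfty tT _ _ _ (V_neq_ninfty tT)) /(_ w0 w0S) [_ Vlt].
by exists (f t y u w0).
Qed.

Lemma V_proper_Gamma x0 p : Phi T f L K S pi x0 p < +oo ->
  forall t, (t <= T)%N -> proper_fun (Vf t) /\ Gamma_class (Vf t).
Proof.
rewrite Phi_V0 => V0 t tT; split; last exact: V_Gamma.
split; first exact: V_neq_ninfty.
by have [y Vy] := V_dom_nonempty V0 tT; exists y, p.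
Qed.

Lemma Phi_convex x0 p1 p2 (l : R) : (0 < l)%R -> (l < 1)%R ->
  Phi T f L K S pi x0 (l *: p1 + (1 - l) *: p2)%R
    <= l%:E * Phi T f L K S pi x0 p1 + (1 - l)%:E * Phi T f L K S pi x0 p2.
Proof.
move=> l0 l1; rewrite !Phi_V0; have [_ [_ Vconv]] := V_Gamma (leq0n T).
by have := Vconv x0 x0 p1 p2 l l0 l1; rewrite comb_self.
Qed.

Section Theta_value_functions.
Variable Pset : set P.
Hypothesis L_ThetaK : forall t w, (t < T)%N -> w \in S t.+1 ->
  ThetaK_class Pset (fun z p => L t z.1 z.2 w p).
Hypothesis K_Theta : Theta_class Pset K.

Lemma L_rect_dom t w x u p : (t < T)%N -> w \in S t.+1 -> L t x u w p < +oo ->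
  Pset p /\ forall q, Pset q -> L t x u w q < +oo.
Proof.
move=> tT wS; have [/Theta_classP [_ Ldom _] _] := L_ThetaK tT wS.
exact: (Ldom (x, u) p).
Qed.

Lemma L_interior_differentiable t w x u p q : (t < T)%N -> w \in S t.+1 ->
  L t x u w p < +oo -> interior Pset q -> differentiable (fun r => fine (L t x u w r)) q.
Proof.
move=> tT wS; have [/Theta_classP [_ _ Ldiff] _] := L_ThetaK tT wS.
exact: (Ldiff (x, u) p q).
Qed.

Lemma V_rect_dom t : (t <= T)%N -> rect_dom Pset (Vf t).
Proof.
move: t; apply: down_ind => [|t tT Vdom y p].
  by rewrite V_T; have [] := (Theta_classP _ _).1 K_Theta.
have VN := V_neq_ninfty tT; have [u ->] := V_argmin tT y p.
move=> /(Q_lt_pinfty tT _ _ _ VN) Qlt; have [w0 w0S] := support_nonempty tT.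
split; first exact: (L_rect_dom tT w0S (Qlt w0 w0S).1).1.
move=> q Pq; rewrite V_inf //; apply: le_lt_trans (ereal_inf_lbound _) _; first by exists u.
apply/(Q_lt_pinfty tT _ _ _ VN) => w wS; have [Llt Vlt] := Qlt w wS; split.
- exact: (L_rect_dom tT wS Llt).2 q Pq.
- exact: (Vdom _ _ Vlt).2 q Pq.
Qed.

Section gradient.
Variables (t : nat) (x : X) (u : U).
Hypothesis tT : (t < T)%N.

Let Qr (r : P) : R :=
  Ew_real S pi t.+1 (fun w => fine (L t x u w r) + fine (Vf t.+1 (f t x u w) r))%R.

Lemma Q_fin q : Qf t x u q < +oo -> forall r, Pset r -> Qf t x u r = (Qr r)%:E.
Proof.
move=> /(Q_lt_pinfty tT _ _ _ (V_neq_ninfty tT)) Qlt r Pr.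
have Lfin w : w \in S t.+1 -> L t x u w r \is a fin_num.
  move=> wS; apply: fin_numP_neq_lt (L_neq_ninfty _ _ _ _ _) _.
  exact: (L_rect_dom tT wS (Qlt w wS).1).2 r Pr.
have Vfin w : w \in S t.+1 -> Vf t.+1 (f t x u w) r \is a fin_num.
  move=> wS; apply: fin_numP_neq_lt (V_neq_ninfty tT _ _) _.
  exact: (V_rect_dom tT (Qlt w wS).2).2 r Pr.
rewrite /Q /Ew wsum_fin => [|w wS]; last by rewrite fin_numD Lfin ?Vfin.
by congr EFin; apply: eq_big_seq => w wS; rewrite fineD ?Lfin ?Vfin.
Qed.

Lemma Q_real_differentiable q q' : interior_differentiable Pset (Vf t.+1) ->
  Qf t x u q < +oo -> interior Pset q' ->
  differentiable Qr q' /\ forall h, 'd Qr q' h = Ew_real S pi t.+1 (fun w =>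
    'd (fun r => fine (L t x u w r)) q' h + 'd (fun r => fine (Vf t.+1 (f t x u w) r)) q' h)%R.
Proof.
move=> Vdiff /(Q_lt_pinfty tT _ _ _ (V_neq_ninfty tT)) Qlt iq.
have Ld w : w \in S t.+1 -> differentiable (fun r => fine (L t x u w r)) q'.
  by move=> wS; exact: L_interior_differentiable tT wS (Qlt w wS).1 iq.
have Vd w : w \in S t.+1 -> differentiable (fun r => fine (Vf t.+1 (f t x u w) r)) q'.
  by move=> wS; exact: Vdiff _ _ _ (Qlt w wS).2 iq.
have LVd w (wS : w \in S t.+1) := differentiableD (Ld w wS) (Vd w wS).
have [Qd dQ] := differentiable_wsum (pi t.+1) LVd.
split=> [|h]; first exact: Qd.
apply: eq_trans (dQ h) _; apply: eq_big_seq => w wS.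
by rewrite diffD; [reflexivity | exact: Ld | exact: Vd].
Qed.

Lemma V_gradient q : interior_differentiable Pset (Vf t.+1) -> interior Pset q ->
  Vf t x q = Qf t x u q -> Qf t x u q < +oo ->
  differentiable (fun r => fine (Vf t x r)) q /\
  forall h, 'd (fun r => fine (Vf t x r)) q h = Ew_real S pi t.+1 (fun w =>
    'd (fun r => fine (L t x u w r)) q h + 'd (fun r => fine (Vf t.+1 (f t x u w) r)) q h)%R.
Proof.
move=> Vdiff iq Vq Qq; have [Qd dQ] := Q_real_differentiable Vdiff Qq iq.
have Vq_lt : Vf t x q < +oo by rewrite Vq.
have Vfin r : Pset r -> Vf t x r \is a fin_num.
  move=> Pr; apply: fin_numP_neq_lt (V_neq_ninfty (ltnW tT) _ _) _.
  exact: (V_rect_dom (ltnW tT) Vq_lt).2 r Pr.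
have V_le_Q r : Pset r -> (fine (Vf t x r) <= Qr r)%R.
  move=> Pr; rewrite -lee_fin fineK ?Vfin // -(Q_fin Qq Pr) V_inf //.
  by apply: ereal_inf_lbound; exists u.
have V_eq_Q : fine (Vf t x q) = Qr q by rewrite Vq (Q_fin Qq (nbhs_singleton iq)).
have V_mid v : Pset (q + v)%R -> Pset (q - v)%R ->
    (2 * fine (Vf t x q) <= fine (Vf t x (q + v)%R) + fine (Vf t x (q - v)%R))%R.
  move=> Pqv Pqmv; apply: convex_ext_midpoint (V_Gamma (ltnW tT)).2.2 _ _ _.
  - exact: Vfin (nbhs_singleton iq).
  - exact: Vfin Pqv.
  - exact: Vfin Pqmv.
have [Vd dV] := midconvex_touched_differentiable iq Qd V_le_Q V_eq_Q V_mid.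
by split=> // h; rewrite dV dQ.
Qed.

End gradient.

Lemma V_interior_differentiable t : (t <= T)%N -> interior_differentiable Pset (Vf t).
Proof.
move: t; apply: down_ind => [|t tT Vdiff y p q Vlt iq].
  by rewrite V_T; have [] := (Theta_classP _ _).1 K_Theta.
have [u Vu] := V_argmin tT y q.
have Qq : Qf t y u q < +oo.
  by rewrite -Vu; exact: (V_rect_dom (ltnW tT) Vlt).2 q (nbhs_singleton iq).
exact: (V_gradient tT Vdiff iq Vu Qq).1.
Qed.

Lemma V_Theta t : (t <= T)%N -> Theta_class Pset (Vf t).
Proof.
move=> tT; apply/Theta_classP; split.
- exact: V_Gamma.
- exact: V_rect_dom.
- exact: V_interior_differentiable.
Qed.

Lemma V_gradient_recursion p : interior Pset p ->
  (forall x, Vf T x p < +oo ->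
     forall h, 'd (fun q => fine (Vf T x q)) p h = 'd (fun q => fine (K x q)) p h) /\
  (forall t, (t < T)%N -> forall x, Vf t x p < +oo ->
     forall u, Ustar T f L K S pi t x p u ->
     forall h, 'd (fun q => fine (Vf t x q)) p h
       = Ew_real S pi t.+1 (fun w =>
           'd (fun q => fine (L t x u w q)) p h
           + 'd (fun q => fine (Vf t.+1 (f t x u w) q)) p h)%R).
Proof.
move=> ip; split=> [x _ h|t tT x Vlt u uopt h]; first by rewrite V_T.
have Vu := Ustar_V tT uopt; have Qlt : Qf t x u p < +oo by rewrite -Vu.
exact: (V_gradient tT (V_interior_differentiable tT) ip Vu Qlt).2 h.
Qed.

Lemma Phi_fin_num x0 p0 : Phi T f L K S pi x0 p0 < +oo ->
  forall p, Pset p -> Phi T f L K S pi x0 p \is a fin_num.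
Proof.
rewrite Phi_V0 => V0 p Pp; rewrite Phi_V0.
apply: fin_numP_neq_lt (V_neq_ninfty (leq0n T) _ _) _.
exact: (V_rect_dom (leq0n T) V0).2 p Pp.
Qed.

Lemma Phi_differentiable x0 p0 : Phi T f L K S pi x0 p0 < +oo ->
  forall p, interior Pset p -> differentiable (fun q => fine (Phi T f L K S pi x0 q)) p.
Proof.
rewrite Phi_V0 => V0 p ip; under eq_fun do rewrite Phi_V0.
exact: V_interior_differentiable (leq0n T) _ _ _ V0 ip.
Qed.

End Theta_value_functions.

End parametric_value_functions.

Theorem theorem2 (R : realType) (nx nu nw np T : nat)
  (f : nat -> 'rV[R]_nx -> 'rV[R]_nu -> 'rV[R]_nw -> 'rV[R]_nx)
  (L : nat -> 'rV[R]_nx -> 'rV[R]_nu -> 'rV[R]_nw -> 'rV[R]_np -> \bar R)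
  (K : 'rV[R]_nx -> 'rV[R]_np -> \bar R)
  (x0 : 'rV[R]_nx) (Pad : set 'rV[R]_np)
  (S : nat -> seq 'rV[R]_nw) (pi : nat -> 'rV[R]_nw -> R) :
  (* stage costs and final cost take values in ]-oo,+oo] *)
  (forall t x u w p, L t x u w p != -oo%E) ->
  (forall x p, K x p != -oo%E) ->
  (* (A1) independent noises W_1..W_T with finite supports *)
  (forall t, (1 <= t <= T)%N -> finite_support_law S pi t) ->
  (* (A2)(i) feasibility *)
  (exists p, Pad p /\ (Phi T f L K S pi x0 p < +oo)%E) ->
  (* (A2)(ii) affine dynamics *)
  (forall t, (t < T)%N -> affine_dyn (f t)) ->
  (* (A2)(iii) *)
  (forall t w, (t < T)%N -> w \in S t.+1 ->
     GammaK_class (fun z p => L t z.1 z.2 w p)) ->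
  (* (A2)(iv) *)
  Gamma_class K ->
  (* conclusion 1: V_0..V_T proper and in Gamma[X,P] *)
  (forall t, (t <= T)%N ->
     proper_fun (V T f L K S pi t) /\ Gamma_class (V T f L K S pi t)) /\
  (forall Pset : set 'rV[R]_np,
     (* (A3) *)
     (forall t w, (t < T)%N -> w \in S t.+1 ->
        ThetaK_class Pset (fun z p => L t z.1 z.2 w p)) ->
     Theta_class Pset K ->
     (* (a) *)
     ((forall t, (t <= T)%N -> Theta_class Pset (V T f L K S pi t)) /\
      (forall p, interior Pset p ->
        (forall x, (V T f L K S pi T x p < +oo)%E ->
           forall h, 'd (fun q => fine (V T f L K S pi T x q)) p h
                     = 'd (fun q => fine (K x q)) p h) /\
        (forall t, (t < T)%N -> forall x,
           (V T f L K S pi t x p < +oo)%E ->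
           forall u, Ustar T f L K S pi t x p u ->
           forall h, 'd (fun q => fine (V T f L K S pi t x q)) p h
             = Ew_real S pi t.+1 (fun w =>
                 'd (fun q => fine (L t x u w q)) p h
                 + 'd (fun q => fine (V T f L K S pi t.+1 (f t x u w) q)) p h)))) /\
     (* (b) *)
     (forall Pad' : set 'rV[R]_np, Pad' `<=` Pset -> closed Pad' ->
        convex_subset Pad' ->
        (forall p, Pad' p -> Phi T f L K S pi x0 p \is a fin_num) /\
        (forall p1 p2 (l : R), Pad' p1 -> Pad' p2 -> 0 < l -> l < 1 ->
           (Phi T f L K S pi x0 (l *: p1 + (1 - l) *: p2)%R
             <= l%:E * Phi T f L K S pi x0 p1
                + (1 - l)%:E * Phi T f L K S pi x0 p2)%E) /\
        (forall p, interior Pset p ->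
           differentiable (fun q => fine (Phi T f L K S pi x0 q)) p))).
Proof.
move=> LN _ law [p0 [_ Phi0]] aff LG KG.
split; first exact (V_proper_Gamma LN law aff LG KG Phi0).
move=> Pset LT KT; split.
  split=> [t tT|p ip]; first exact (V_Theta LN law aff LG KG LT KT tT).
  exact (V_gradient_recursion LN law aff LG KG LT KT ip).
move=> Pad' Pad'_sub _ _; split; [|split].
- by move=> p /Pad'_sub; exact (Phi_fin_num LN law aff LG KG LT KT Phi0 (p := p)).
- by move=> p1 p2 l _ _; exact (Phi_convex LN law aff LG KG x0 p1 p2 (l := l)).
- exact (Phi_differentiable LN law aff LG KG LT KT Phi0).
Qed.
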